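(* Let $\Gamma$ be a 3-colex and $E=\prod_{\nu\in\Omega}Z_\nu$ a $Z$-type error on the 3D color code on $\Gamma$. Suppose that for each unordered pair $\{c,c'\}$ of distinct colors, $\mathsf E_{cc'}$ is a set of edges of $\Gamma^{*\setminus cc'}$ such that $\prod_{e\in\mathsf E_{cc'}}Z_e=\pi_{cc'}(E)\,S_{cc'}$ for some $Z$-stabilizer $S_{cc'}$ of the 3D toric code on $\Gamma^{*\setminus cc'}$. Then $\mathsf E=\sum_{\{c,c'\}}\mathsf E_{cc'}$ equals $\delta(E\overline S)$ for some $Z$-stabilizer $\overline S$ of the color code; that is, $\mathsf E$ estimates the edge boundary $\delta E$ up to the edge boundary of a $Z$-stabilizer of the color code.
   Context: Colors are $\{r,b,g,y\}$. A 3-colex $\Gamma$ is a 3-dimensional cell complex without boundary in which every vertex is 4-valent and lies in exactly four 3-cells, and whose 3-cells are properly 4-colored: every face lies in exactly two 3-cells, which have different colors. The dual complex $\Gamma^*$ has an $i$-cell for every $(3-i)$-cell of $\Gamma$, with incidences reversed; every 3-cell of $\Gamma^*$ is a tetrahedron. A vertex of $\Gamma^*$ is given the color of the corresponding 3-cell of $\Gamma$, so the four vertices of each tetrahedron have distinct colors. An edge of $\Gamma^*$ with endpoint colors $x,y$ is an $xy$-edge; each tetrahedron has exactly one $xy$-edge for each pair $x\ne y$. The 3D color code on $\Gamma$ has one qubit per tetrahedron $\nu$ of $\Gamma^*$, $X$-stabilizer generators $B^X_v=\prod_{\nu\ni v}X_\nu$ for vertices $v$ and $Z$-stabilizer generators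 $B^Z_e=\prod_{\nu\supset e}Z_\nu$ for edges $e$; $Z$-stabilizers are products of the $B^Z_e$. For distinct colors $c,c'$ let $\{d,d'\}$ be the remaining two colors. The minor complex $\Gamma^{*\setminus cc'}$ has as vertices the $d$- and $d'$-vertices of $\Gamma^*$, as edges the $dd'$-edges of $\Gamma^*$, one face $f_e$ for each $cc'$-edge $e$ of $\Gamma^*$ whose boundary $\partial f_e$ is the set of $dd'$-edges of the tetrahedra containing $e$ (these form a cycle), and one 3-cell for each vertex of color $c$ or $c'$. The 3D toric code on $\Gamma^{*\setminus cc'}$ has qubits on edges, $X$-checks $\prod_{e\ni v}X_e$ on vertices and $Z$-stabilizer generators $\prod_{t\in\partial f}Z_t$ for faces $f$; its $Z$-stabilizers are products of these. For a tetrahedron $\nu$, $\pi_{cc'}(\nu)$ is its unique $dd'$-edge, and $\pi_{cc'}(\prod_{\nu\in\Omega}Z_\nu)=\prod_{\nu\in\Omega}Z_{\pi_{cc'}(\nu)}$ (with $Z^2=I$); $\pi_{cc'}=\pi_{c'c}$. The edge boundary of a $Z$-operator $E=\prod_{\nu\in\Omega}Z_\nu$ is $\delta E=\sum_{\nu\in\Omega}\sum_{\{x,y\}}\pi_{xy}(\nu)$, the sum over the six unordered pairs of distinct colors (i.e. over the six edges of $\nu$), taken mod 2 as a set of edges of $\Gamma^*$. Sums of edge sets are mod-2 (symmetric difference). *)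

From HB Require Import structures.
From mathcomp Require Import all_boot.
Set Implicit Arguments. Unset Strict Implicit. Unset Printing Implicit Defensive.

Inductive color := r | b | g | y.

Definition color2o (c : color) : 'I_4 :=
  match c with r => inord 0 | b => inord 1 | g => inord 2 | y => inord 3 end.
Definition o2color (i : 'I_4) : color :=
  match val i with 0 => r | 1 => b | 2 => g | _ => y end.
Lemma color2oK : cancel color2o o2color.
Proof. by case; rewrite /o2color /= inordK. Qed.
HB.instance Definition _ := Finite.copy color (can_type color2oK).

(** An unordered pair {c,c'} of distinct colours is a 2-element set of colours;
    its complement ~: p is the pair {d,d'} of remaining colours. *)
Definition cpair (p : {set color}) : bool := #|p| == 2.

(** Combinatorial model of the dual complex Γ* of a 3-colex Γ:
    - vertices (dual to 3-cells of Γ), coloured;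
    - edges (dual to faces of Γ), each with two endpoints of different colours
      (every face of Γ lies in exactly two 3-cells of different colours);
    - triangles (dual to edges of Γ);
    - tetrahedra (dual to vertices of Γ, which are 4-valent and lie in four
      3-cells), with one vertex of each colour, one edge for each pair of
      colours and one triangle opposite to each colour;
    - every triangle lies in exactly two tetrahedra (every edge of Γ has
      exactly two endpoints: Γ has no boundary). *)
Record colex_dual := ColexDual {
  Vx : finType;
  Ed : finType;
  Tri : finType;
  Tet : finType;
  vcol : Vx -> color;
  eend : Ed -> {set Vx};
  tv : Tet -> color -> Vx;
  te : Tet -> {set color} -> Ed;
  tt : Tet -> color -> Tri;
  tv_col : forall t c, vcol (tv t c) = c;
  eend_two : forall e, #|eend e| = 2 /\ #|[set vcol v | v in eend e]| = 2;
  te_end : forall t p, cpair p -> eend (te t p) = [set tv t c | c in p];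
  tt_cons : forall t t' d d', tt t d = tt t' d' ->
     d = d' /\ (forall c, c != d -> tv t c = tv t' c)
            /\ (forall p, cpair p -> d \notin p -> te t p = te t' p);
  tri_two : forall T, #|[set t | [exists d, tt t d == T]]| = 2;
  vx_in_tet : forall v, exists t c, tv t c = v;
  ed_in_tet : forall e, exists t p, cpair p /\ te t p = e
}.

Section Ops.
Variable G : colex_dual.

Definition pedge (p : {set color}) (e : Ed G) : bool :=
  [set vcol v | v in eend e] == p.

Definition contains (t : Tet G) (e : Ed G) : bool :=
  [exists p, cpair p && (te t p == e)].

Definition symd (T : finType) (A B : {set T}) : {set T} :=
  (A :\: B) :|: (B :\: A).

(** Z-stabilizers of the colour code: products of B^Z_e = prod_{t ⊃ e} Z_t,
    i.e. mod-2 sums of the sets {t | t ⊃ e} over e in some set F of edges. *)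
Definition cc_zstab (S : {set Tet G}) : Prop :=
  exists F : {set Ed G},
    S = [set t | odd #|[set e in F | contains t e]|].

(** pi_{cc'}(prod_{t in Om} Z_t): mod-2 sum of the dd'-edges of the t in Om
    (p = {c,c'}, ~: p = {d,d'}). *)
Definition proj (p : {set color}) (Om : {set Tet G}) : {set Ed G} :=
  [set e | odd #|[set t in Om | te t (~: p) == e]|].

(** Boundary (mod 2) of the face f_e of the minor complex Γ^{*\cc'}
    associated with a cc'-edge e: the dd'-edges of the tetrahedra containing e. *)
Definition face_bd (p : {set color}) (e : Ed G) : {set Ed G} :=
  [set g | odd #|[set t | contains t e && (te t (~: p) == g)]|].

(** Z-stabilizers of the 3D toric code on the minor Γ^{*\cc'}:
    mod-2 sums of face boundaries of a set F of faces (= of cc'-edges). *)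
Definition tc_zstab (p : {set color}) (S : {set Ed G}) : Prop :=
  exists F : {set Ed G}, (forall e, e \in F -> pedge p e) /\
    S = [set g | odd #|[set e in F | g \in face_bd p e]|].

(** Edge boundary δ(prod_{t in Om} Z_t): mod-2 sum of all six edges of every t in Om. *)
Definition delta (Om : {set Tet G}) : {set Ed G} :=
  [set e | odd #|[set tp : Tet G * {set color} |
                   (tp.1 \in Om) && cpair tp.2 && (te tp.1 tp.2 == e)]|].

Definition sum_pairs (Ep : {set color} -> {set Ed G}) : {set Ed G} :=
  [set e | odd #|[set p | cpair p && (e \in Ep p)]|].

End Ops.

(** The projections
    [pi_cc'] of a Z-error, summed over the six colour pairs, give back each of
    the six edges of every tetrahedron exactly once, so they add up to [delta E].
    Each toric-code stabilizer is a sum of face boundaries [face_bd p e], and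
    [face_bd p e] is the edge boundary of the colour-code generator [B^Z_e]:
    around a cc'-edge e, the tetrahedra containing it are paired by flipping
    across a triangle, which cancels all edges of [B^Z_e] except its dd'-edges.
    Since [delta] is additive, the sum of the toric stabilizers is the edge
    boundary of a colour-code Z-stabilizer. *)

From HB Require Import structures.
From mathcomp Require Import all_boot.
Set Implicit Arguments. Unset Strict Implicit. Unset Printing Implicit Defensive.

Section SymmetricDifference.
Variable T : finType.
Implicit Types A B C : {set T}.

Lemma in_symd A B x : (x \in symd A B) = (x \in A) (+) (x \in B).
Proof. by rewrite !inE; case: (x \in A); case: (x \in B). Qed.

Lemma symdA : associative (@symd T).
Proof. by move=> A B C; apply/setP => x; rewrite !in_symd addbA. Qed.

Lemma symdC : commutative (@symd T).
Proof. by move=> A B; apply/setP => x; rewrite !in_symd addbC. Qed.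

Lemma sym0d : left_id set0 (@symd T).
Proof. by move=> A; apply/setP => x; rewrite in_symd in_set0. Qed.

Lemma symd0 : right_id set0 (@symd T).
Proof. by move=> A; rewrite symdC sym0d. Qed.

End SymmetricDifference.

HB.instance Definition _ (T : finType) :=
  Monoid.isComLaw.Build {set T} set0 (@symd T) (@symdA T) (@symdC T) (@sym0d T).

Section Mod2Sums.
Variables (I T U : finType).

Lemma in_big_symd (P : pred I) (F : I -> {set T}) x :
  (x \in \big[@symd _/set0]_(i | P i) F i) = \big[addb/false]_(i | P i) (x \in F i).
Proof.
by apply: (big_morph (fun A : {set T} => x \in A)) => [A B|]; rewrite ?in_symd ?in_set0.
Qed.

Lemma odd_card_big (P : pred I) :
  odd #|[set i | P i]| = \big[addb/false]_(i | P i) true.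
Proof.
rewrite -sum1_card (big_morph odd oddD (erefl : odd 0 = false)).
by apply: eq_bigl => i; rewrite inE.
Qed.

Lemma odd_card_symd (P : pred I) (F : I -> {set T}) :
  [set x | odd #|[set i | P i && (x \in F i)]|] = \big[@symd _/set0]_(i | P i) F i.
Proof.
apply/setP => x; rewrite inE odd_card_big in_big_symd big_mkcond [RHS]big_mkcond.
by apply: eq_bigr => i _; case: (P i); case: (x \in F i).
Qed.

Lemma big_symd_in_morph (h : T -> {set U}) :
  {morph (fun A : {set T} => \big[@symd _/set0]_(t in A) h t) : A B / symd A B}.
Proof.
move=> A B /=; rewrite !(big_mkcond (fun t => t \in _)) -big_split /=.
apply: eq_bigr => t _; rewrite in_symd.
case: (t \in A); case: (t \in B); rewrite /= ?sym0d ?symd0 //.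
by apply/setP => u; rewrite in_symd addbb in_set0.
Qed.

Lemma big_symd_in_linear (h : T -> {set U}) (P : pred I) (A : I -> {set T}) :
  \big[@symd _/set0]_(t in \big[@symd _/set0]_(i | P i) A i) h t =
  \big[@symd _/set0]_(i | P i) \big[@symd _/set0]_(t in A i) h t.
Proof.
apply: (big_morph _ (big_symd_in_morph h)).
by rewrite big_pred0 // => t; rewrite in_set0.
Qed.

End Mod2Sums.

Lemma odd_card_involution (T : finType) (s : T -> T) (A : {set T}) :
  involutive s -> (forall x, s x != x) -> (forall x, (s x \in A) = (x \in A)) ->
  ~~ odd #|A|.
Proof.
move=> sK s_neq sA.
set low := [set x in A | enum_rank x < enum_rank (s x)].
have high : s @: low = A :\: low.
  rewrite (can2_imset_pre _ sK sK); apply/setP => x; rewrite !inE sK sA.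
  have rank_neq : (enum_rank x == enum_rank (s x) :> nat) = false.
    by apply/negbTE; rewrite val_eqE (inj_eq enum_rank_inj) eq_sym.
  by case: (x \in A); rewrite //= ltnNge leq_eqVlt rank_neq andbT.
rewrite -(cardsID low) -high (card_imset _ (can_inj sK)).
have -> : A :&: low = low by apply/setIidPr/subsetP => x; rewrite inE => /andP[].
by rewrite addnn odd_double.
Qed.

Lemma o2colorK : cancel o2color color2o.
Proof. by case=> [[|[|[|[|k]]]] lt_k4] //; apply: val_inj; rewrite /= inordK. Qed.

Lemma card_color : #|{: color}| = 4.
Proof. by rewrite -(card_ord 4); apply: (bij_eq_card (Bijective color2oK o2colorK)). Qed.

Lemma cpairC p : cpair (~: p) = cpair p.
Proof.
rewrite /cpair -(eqn_add2l #|p|) cardsC card_color.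
by case: #|p| => [|[|[|[|[|k]]]]].
Qed.

Lemma exists_notin_cpairs p q : cpair p -> cpair q -> q != ~: p ->
  exists2 x, x \notin p & x \notin q.
Proof.
move=> cp cq q_neq; have [sub | /subsetPn[x]] := boolP (~: p \subset q).
  case/negP: q_neq; rewrite eq_sym eqEcard sub.
  by move: cq; rewrite -(cpairC p) in cp; rewrite /cpair (eqP cp) => /eqP ->.
by rewrite inE => x_p x_q; exists x.
Qed.

Section ColexDual.
Variable G : colex_dual.
Implicit Types (t : Tet G) (e : Ed G) (p q : {set color}) (Om : {set Tet G}).

Definition tri_tets t x := [set t' | tt t' x == tt t x].

Lemma card_tri_tets t x : #|tri_tets t x| = 2.
Proof.
rewrite -(tri_two (tt t x)); apply: eq_card => t'; rewrite !inE.
apply/eqP/existsP => [e_tt | [d /eqP e_tt]]; first by exists x; rewrite e_tt.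
by have [d_x _] := tt_cons e_tt; rewrite -e_tt d_x.
Qed.

Lemma tri_tets_self t x : t \in tri_tets t x.
Proof. by rewrite inE. Qed.

Lemma exists_tri_tets t x : exists t', t' \in tri_tets t x :\ t.
Proof.
apply/set0Pn; rewrite -card_gt0.
by move: (cardsD1 t (tri_tets t x)); rewrite card_tri_tets tri_tets_self add1n => -[<-].
Qed.

Definition flip x t : Tet G := xchoose (exists_tri_tets t x).

Lemma flip_spec x t : (flip x t != t) && (flip x t \in tri_tets t x).
Proof. by rewrite -in_setD1; apply: xchooseP. Qed.

Lemma flip_neq x t : flip x t != t.
Proof. by case/andP: (flip_spec x t). Qed.

Lemma flip_tri_tets x t : flip x t \in tri_tets t x.
Proof. by case/andP: (flip_spec x t). Qed.

Lemma tri_tets_flip x t : tri_tets (flip x t) x = tri_tets t x.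
Proof.
have := flip_tri_tets x t; rewrite inE => /eqP tt_flip.
by apply/setP => u; rewrite !inE tt_flip.
Qed.

Lemma flipK x : involutive (flip x).
Proof.
move=> t; have /eqP/cards2P[t1 [t2 [_ tri_tets_t]]] := card_tri_tets t x.
have := flip_neq x (flip x t); have := flip_neq x t.
have := tri_tets_self t x; have := flip_tri_tets x t.
have := flip_tri_tets x (flip x t); rewrite tri_tets_flip tri_tets_t !inE.
by do 3![case/orP=> /eqP->]; rewrite ?eqxx.
Qed.

Lemma te_flip x t q : cpair q -> x \notin q -> te (flip x t) q = te t q.
Proof.
move=> cq xq; have := flip_tri_tets x t; rewrite inE => /eqP tt_flip.
by have [_ [_ te_eq]] := tt_cons tt_flip; apply: te_eq.
Qed.

Lemma pedge_te t p : cpair p -> pedge p (te t p).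
Proof.
move=> cp; rewrite /pedge te_end //; apply/eqP/setP => c.
apply/imsetP/idP => [[v /imsetP[c' c'_p ->] ->] | c_p]; first by rewrite tv_col.
by exists (tv t c); [apply/imsetP; exists c | rewrite tv_col].
Qed.

Lemma contains_pedge t e p : cpair p -> pedge p e -> contains t e = (te t p == e).
Proof.
move=> cp pe; apply/existsP/eqP => [[q /andP[cq /eqP te_q]] | <-].
  by move: (pedge_te t cq) pe; rewrite /pedge te_q => /eqP-> /eqP <-.
by exists p; rewrite cp eqxx.
Qed.

Definition star e := [set t | contains t e].

Lemma cc_zstabE S :
  cc_zstab S <-> exists F : {set Ed G}, S = \big[@symd _/set0]_(e in F) star e.
Proof.
have starE (F : {set Ed G}) :
    [set t | odd #|[set e in F | contains t e]|] = \big[@symd _/set0]_(e in F) star e.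
  rewrite -odd_card_symd; apply/setP => t; rewrite !inE.
  by congr odd; apply: eq_card => e; rewrite !inE.
by split=> [] [F ->]; exists F; rewrite starE.
Qed.

Lemma tc_zstabE p S :
  tc_zstab p S <-> exists F : {set Ed G},
    (forall e, e \in F -> pedge p e) /\ S = \big[@symd _/set0]_(e in F) face_bd p e.
Proof. by split=> -[F [pF ->]]; exists F; rewrite ?odd_card_symd. Qed.

Lemma projE p Om : proj p Om = \big[@symd _/set0]_(t in Om) [set te t (~: p)].
Proof.
rewrite -odd_card_symd; apply/setP => e; rewrite !inE.
by congr odd; apply: eq_card => t; rewrite !inE eq_sym.
Qed.

Lemma face_bdE p e : face_bd p e = proj p (star e).
Proof. by apply/setP => g; rewrite !inE; congr odd; apply: eq_card => t; rewrite !inE. Qed.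

Lemma deltaE Om :
  delta Om = \big[@symd _/set0]_(t in Om) \big[@symd _/set0]_(q | cpair q) [set te t q].
Proof.
rewrite (pair_big_dep (fun t => t \in Om) (fun _ q => cpair q)) /= -odd_card_symd.
by apply/setP => e; rewrite !inE; congr odd; apply: eq_card => -[t q]; rewrite !inE eq_sym.
Qed.

Lemma proj_star_even e p q : cpair p -> pedge p e -> cpair q -> q != ~: p ->
  \big[@symd _/set0]_(t in star e) [set te t q] = set0.
Proof.
(* Flipping across the triangle opposite a colour outside p and q fixes both
   e and the q-edge, so it pairs up the tetrahedra counted at each edge. *)
move=> cp pe cq q_neq; have [x xp xq] := exists_notin_cpairs cp cq q_neq.
rewrite -odd_card_symd; apply/setP => g; rewrite inE in_set0; apply/negbTE.
apply: (odd_card_involution (flipK x)) => [t | t]; first exact: flip_neq.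
by rewrite !inE !(contains_pedge _ cp pe) !te_flip.
Qed.

Lemma delta_star e p : cpair p -> pedge p e -> delta (star e) = face_bd p e.
Proof.
move=> cp pe; rewrite deltaE exchange_big /= (bigD1 (~: p)) ?cpairC //=.
rewrite [X in symd _ X]big1 ?symd0 => [|q /andP[cq q_neq]]; first by rewrite face_bdE projE.
exact: proj_star_even cp pe cq q_neq.
Qed.

Lemma delta_symd Om1 Om2 : delta (symd Om1 Om2) = symd (delta Om1) (delta Om2).
Proof. by rewrite !deltaE big_symd_in_morph. Qed.

Lemma delta_big (I : finType) (P : pred I) (A : I -> {set Tet G}) :
  delta (\big[@symd _/set0]_(i | P i) A i) = \big[@symd _/set0]_(i | P i) delta (A i).
Proof. by rewrite deltaE big_symd_in_linear; apply: eq_bigr => i _; rewrite deltaE. Qed.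

Lemma sum_proj Om : \big[@symd _/set0]_(p | cpair p) proj p Om = delta Om.
Proof.
rewrite deltaE (eq_bigr _ (fun p _ => projE p Om)) exchange_big /=.
apply: eq_bigr => t _; rewrite (reindex_inj (@setC_inj _)) /=.
by apply: eq_big => [q | q _]; rewrite ?cpairC ?setCK.
Qed.

End ColexDual.

Theorem theorem4 (G : colex_dual) (Om : {set Tet G})
    (Ecc : {set color} -> {set Ed G}) :
  (forall p, cpair p ->
     (forall e, e \in Ecc p -> pedge (~: p) e) /\
     exists S, tc_zstab p S /\ Ecc p = symd (proj p Om) S) ->
  exists Sbar, cc_zstab Sbar /\ sum_pairs Ecc = delta (symd Om Sbar).
Proof.
move=> hyp.
have /fin_all_exists[F HF] : forall p, exists Fp : {set Ed G}, cpair p ->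
    (forall e, e \in Fp -> pedge p e) /\
    Ecc p = symd (proj p Om) (\big[@symd _/set0]_(e in Fp) face_bd p e).
  move=> p; case cp: (cpair p); last by exists set0.
  by have [_ [S [/tc_zstabE[Fp [pFp ->]] ->]]] := hyp p cp; exists Fp.
exists (\big[@symd _/set0]_(p | cpair p) \big[@symd _/set0]_(e in F p) star e); split.
  by apply/cc_zstabE; exists (\big[@symd _/set0]_(p | cpair p) F p); rewrite big_symd_in_linear.
rewrite /sum_pairs odd_card_symd (eq_bigr _ (fun p cp => (HF p cp).2)) big_split /=.
rewrite sum_proj delta_symd delta_big; congr symd; apply: eq_bigr => p cp.
by rewrite delta_big; apply: eq_bigr => e eF; rewrite (delta_star cp ((HF p cp).1 e eF)).
Qed.
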